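(* Assume $\sqrt T\le W\le T$ and $968kS\le T$. Let $\tau$ be the smallest integer $r\ge1$ such that, after the first $r$ rounds of uniform sampling, some arm $i$ satisfies $\sum_{s=1}^{n_i(r)}Y_{i,s}>420c^2\log W$, where $n_i(r)$ is the number of $r'\le r$ with $U_{r'}=i$. Then on the event $E$, $$128kS\le\tau\le 968kS.$$
   Context: Bandit setup: $k$ arms, arm $i$ a distribution on $[0,1]$ with mean $\mu_i$, $\mu^*:=\max_i\mu_i>0$. $\log$ is the natural logarithm; $c:=3$; $T$ is the overall horizon, $W$ a window length (positive integer), and $S:=\frac{c^2\log T}{\mu^*}$. Canonical model: a $k\times T$ table $(Y_{i,s})$ of independent entries with $Y_{i,s}$ distributed as arm $i$, the $s$-th pull of arm $i$ yielding $Y_{i,s}$; $\widehat\mu_{i,s}:=\frac1s\sum_{r=1}^sY_{i,r}$. Uniform sampling is modeled by independent uniform $U_1,\dots,U_T\in[k]$ (independent of the table); the $r$-th round of uniform sampling pulls $U_r$. Events: $E_1$: for every integer $r$ with $128kS\le r\le T$ and every arm $i$, the number of $r'\le r$ with $U_{r'}=i$ is at least $\frac{r}{2k}$ and at most $\frac{3r}{2k}$. $E_2$: for every arm $i$ with $\mu_i>\frac{\mu^*}{64}$ and every integer $s$ with $64S\le s\le T$, $|\mu_i-\widehat\mu_{i,s}|\le c\sqrt{\frac{\mu_i\log T}{s}}$. $E_3$: for every arm $j$ with $\mu_j\le\frac{\mu^*}{64}$ and every integer $s$ with $64S\le s\le T$, $\widehat\mu_{j,s}<\frac{\mu^*}{32}$.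 $E:=E_1\cap E_2\cap E_3$. *)

From Stdlib Require Import Reals Lra Lia.
Open Scope R_scope.

(* Arms are indexed by natural numbers i < k; rounds/pulls are 1-indexed. *)

Definition c : R := 3.

(* mu* = max_{i<k} mu_i  (for k >= 1 and nonnegative means this is the max) *)
Fixpoint maxmu (mu : nat -> R) (n : nat) : R :=
  match n with
  | O => 0
  | S n' => Rmax (maxmu mu n') (mu n')
  end.

Definition Sparam (mu : nat -> R) (k T : nat) : R :=
  c ^ 2 * ln (INR T) / maxmu mu k.

Fixpoint cnt (U : nat -> nat) (i r : nat) : nat :=
  match r with
  | O => O
  | S r' => (cnt U i r' + (if Nat.eqb (U r) i then 1 else 0))%nat
  end.

Fixpoint psum (Y : nat -> nat -> R) (i n : nat) : R :=
  match n with
  | O => 0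
  | S n' => psum Y i n' + Y i n
  end.

Definition muhat (Y : nat -> nat -> R) (i s : nat) : R := psum Y i s / INR s.

Definition E1 (U : nat -> nat) (mu : nat -> R) (k T : nat) : Prop :=
  forall r : nat, 128 * INR k * Sparam mu k T <= INR r -> (r <= T)%nat ->
  forall i : nat, (i < k)%nat ->
    INR r / (2 * INR k) <= INR (cnt U i r) <= 3 * INR r / (2 * INR k).

Definition E2 (Y : nat -> nat -> R) (mu : nat -> R) (k T : nat) : Prop :=
  forall i : nat, (i < k)%nat -> mu i > maxmu mu k / 64 ->
  forall s : nat, 64 * Sparam mu k T <= INR s -> (s <= T)%nat ->
    Rabs (mu i - muhat Y i s) <= c * sqrt (mu i * ln (INR T) / INR s).

Definition E3 (Y : nat -> nat -> R) (mu : nat -> R) (k T : nat) : Prop :=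
  forall j : nat, (j < k)%nat -> mu j <= maxmu mu k / 64 ->
  forall s : nat, 64 * Sparam mu k T <= INR s -> (s <= T)%nat ->
    muhat Y j s < maxmu mu k / 32.

Definition Eevent Y U mu k T : Prop := E1 U mu k T /\ E2 Y mu k T /\ E3 Y mu k T.

Definition stop_cond (Y : nat -> nat -> R) (U : nat -> nat) (k W r : nat) : Prop :=
  exists i : nat, (i < k)%nat /\ psum Y i (cnt U i r) > 420 * c ^ 2 * ln (INR W).

(* Since S mu* = c^2 log T = 9 log T and
   the threshold 420 c^2 log W lies between 1890 log T and 3780 log T (as sqrt T <= W),
   an arm pulled for about 128 k S rounds has a partial sum of at most 1890 log T, while
   the best arm after about 968 k S rounds has one of at least 4030 log T. *)

From Stdlib Require Import Reals Lra Lia Classical ZArith Wf_nat.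
Open Scope R_scope.

Lemma ln_le x y : 0 < x -> x <= y -> ln x <= ln y.
Proof.
  intros Hx Hxy. destruct (Rle_lt_or_eq_dec _ _ Hxy) as [H | ->]; [|lra].
  left. now apply ln_increasing.
Qed.

Lemma Rabs_le_inv a b : Rabs a <= b -> - b <= a <= b.
Proof.
  intros H. pose proof (Rle_abs a). pose proof (Rle_abs (- a)).
  rewrite Rabs_Ropp in *. lra.
Qed.

Lemma exists_nat_floor x : 0 <= x -> exists n, INR n <= x < INR n + 1.
Proof.
  intros Hx. destruct (archimed x) as [H1 H2].
  assert (Hz : (0 < up x)%Z) by (apply lt_IZR; lra).
  exists (Z.to_nat (up x - 1)). rewrite INR_IZR_INZ, Z2Nat.id by lia.
  rewrite minus_IZR. simpl. lra.
Qed.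

Lemma exists_least_nat (P : nat -> Prop) n :
  P n -> exists m, (m <= n)%nat /\ P m /\ forall r, (r < m)%nat -> ~ P r.
Proof.
  intros Pn.
  destruct (dec_inh_nat_subset_has_unique_least_element P (fun j => classic (P j)))
    as [m [[Pm Hleast] _]]; [now exists n|].
  exists m. split; [now apply Hleast|]. split; [exact Pm|].
  intros r Hr Pr. specialize (Hleast r Pr). lia.
Qed.

Lemma mul_sqrt_div s a : 0 < s -> 0 <= a -> s * sqrt (a / s) = sqrt (a * s).
Proof.
  intros Hs Ha.
  replace (a * s) with (a / s * (s * s)) by (field; lra).
  assert (0 <= a / s) by (unfold Rdiv; apply Rmult_le_pos; [lra | left; now apply Rinv_0_lt_compat]).
  rewrite sqrt_mult by nra. rewrite sqrt_square by lra. ring.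
Qed.

Lemma psum_le_mono Y i T a b : (forall s, (1 <= s <= T)%nat -> 0 <= Y i s) ->
  (a <= b)%nat -> (b <= T)%nat -> psum Y i a <= psum Y i b.
Proof.
  intros HY Hab HbT. induction b as [|b IH].
  - replace a with 0%nat by lia. lra.
  - destruct (Nat.eq_dec a (S b)) as [->|Hne]; [lra|].
    simpl. assert (0 <= Y i (S b)) by (apply HY; lia).
    assert (psum Y i a <= psum Y i b) by (apply IH; lia). lra.
Qed.

Lemma cnt_le_mono U i a b : (a <= b)%nat -> (cnt U i a <= cnt U i b)%nat.
Proof.
  intros Hab. induction b as [|b IH].
  - replace a with 0%nat by lia. lia.
  - destruct (Nat.eq_dec a (S b)) as [->|Hne]; [lia|].
    simpl. assert (cnt U i a <= cnt U i b)%nat by (apply IH; lia). lia.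
Qed.

Lemma cnt_le U i r : (cnt U i r <= r)%nat.
Proof. induction r; simpl; [lia|]. destruct (Nat.eqb (U (S r)) i); lia. Qed.

Lemma maxmu_ge mu n i : (i < n)%nat -> mu i <= maxmu mu n.
Proof.
  induction n as [|n IH]; intros H; [lia|]. simpl.
  destruct (Nat.eq_dec i n) as [->|Hne]; [apply Rmax_r|].
  eapply Rle_trans; [apply IH; lia | apply Rmax_l].
Qed.

Lemma maxmu_le1 mu n : (forall i, (i < n)%nat -> mu i <= 1) -> maxmu mu n <= 1.
Proof.
  induction n as [|n IH]; intros H; simpl; [lra|]. apply Rmax_lub.
  - apply IH. intros; apply H; lia.
  - apply H; lia.
Qed.

Lemma maxmu_attained mu n :
  maxmu mu n = 0 \/ exists i, (i < n)%nat /\ mu i = maxmu mu n.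
Proof.
  induction n as [|n IH]; simpl; [now left|].
  unfold Rmax. destruct (Rle_dec (maxmu mu n) (mu n)).
  - right. exists n. split; [lia|reflexivity].
  - destruct IH as [H|[i [Hi Hmi]]]; [now left|]. right. exists i. split; [lia | exact Hmi].
Qed.

Section Uniform_sampling.

Variables (k T W : nat) (mu : nat -> R) (Y : nat -> nat -> R) (U : nat -> nat).

Local Notation m := (maxmu mu k).
Local Notation L := (ln (INR T)).
Local Notation Sp := (Sparam mu k T).

Hypothesis k_ge1 : (1 <= k)%nat.
Hypothesis W_ge1 : (1 <= W)%nat.
Hypothesis mu_bounds : forall i, (i < k)%nat -> 0 <= mu i <= 1.
Hypothesis maxmu_gt0 : m > 0.
Hypothesis Y_ge0 : forall i s, (i < k)%nat -> (1 <= s <= T)%nat -> 0 <= Y i s.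
Hypothesis sqrtT_le_W : sqrt (INR T) <= INR W.
Hypothesis W_le_T : (W <= T)%nat.
Hypothesis horizon_large : 968 * INR k * Sp <= INR T.
Hypotheses (HE1 : E1 U mu k T) (HE2 : E2 Y mu k T) (HE3 : E3 Y mu k T).

Lemma Sparam_mul_maxmu : Sp * m = 9 * L.
Proof. unfold Sparam, c. field. lra. Qed.

(* For T = 1 we get S = 0, and E2 at s = 0 (where muhat = 0/0 = 0) forces mu* = 0. *)
Lemma T_ge2 : (2 <= T)%nat.
Proof.
  destruct (maxmu_attained mu k) as [|[i [Hi Hmi]]]; [lra|].
  destruct (Nat.le_gt_cases 2 T) as [|HT]; [assumption|exfalso].
  assert (HL0 : L = 0) by (replace T with 1%nat by lia; apply ln_1).
  assert (HS0 : Sp = 0).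
  { pose proof Sparam_mul_maxmu as H. rewrite HL0, Rmult_0_r in H.
    destruct (Rmult_integral _ _ H); lra. }
  specialize (HE2 i Hi ltac:(lra) 0%nat ltac:(simpl; lra) ltac:(lia)).
  unfold muhat, Rdiv in HE2. simpl in HE2.
  rewrite Rinv_0, !Rmult_0_r, sqrt_0, Rmult_0_r, Rminus_0_r in HE2.
  apply Rabs_le_inv in HE2. lra.
Qed.

Lemma lnT_gt_half : / 2 < L.
Proof.
  pose proof ln_lt_2. pose proof (le_INR _ _ T_ge2). simpl in *.
  assert (ln 2 <= L) by (apply ln_le; lra). lra.
Qed.

Lemma kS_gt4 : 4 < INR k * Sp.
Proof.
  pose proof lnT_gt_half. pose proof Sparam_mul_maxmu.
  assert (Hm1 : m <= 1) by (apply maxmu_le1; intros; now apply mu_bounds).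
  assert (HkR : 1 <= INR k) by (apply (le_INR 1); lia).
  assert (9 * L <= Sp) by nra. nra.
Qed.

Lemma threshold_bounds : 1890 * L <= 420 * c ^ 2 * ln (INR W) <= 3780 * L.
Proof.
  assert (HT0 : 0 < INR T) by (apply (lt_INR 0); pose proof T_ge2; lia).
  assert (Hsq : 0 < sqrt (INR T)) by (now apply sqrt_lt_R0).
  assert (ln (INR W) <= L) by (apply ln_le; [lra | now apply le_INR]).
  assert (ln (sqrt (INR T)) <= ln (INR W)) by (now apply ln_le).
  assert (L = 2 * ln (sqrt (INR T))).
  { rewrite <- (sqrt_sqrt (INR T)) at 1 by lra. rewrite ln_mult by auto. ring. }
  unfold c. lra.
Qed.

Lemma cnt_bounds r i : 128 * INR k * Sp <= INR r -> (r <= T)%nat -> (i < k)%nat ->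
  INR r <= 2 * INR k * INR (cnt U i r) <= 3 * INR r.
Proof.
  intros Hr HrT Hi. destruct (HE1 r Hr HrT i Hi) as [Hlo Hhi].
  assert (HkR : 0 < INR k) by (apply (lt_INR 0); lia).
  apply Rmult_le_compat_l with (r := 2 * INR k) in Hlo, Hhi; try lra.
  replace (2 * INR k * (INR r / (2 * INR k))) with (INR r) in Hlo by (field; lra).
  replace (2 * INR k * (3 * INR r / (2 * INR k))) with (3 * INR r) in Hhi by (field; lra).
  lra.
Qed.

Lemma psum_close_to_mean i s : (i < k)%nat -> mu i > m / 64 ->
  64 * Sp <= INR s -> (s <= T)%nat -> 0 < INR s ->
  Rabs (psum Y i s - INR s * mu i) <= 3 * sqrt (INR s * mu i * L).
Proof.
  intros Hi Hbig Hs HsT Hs0.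
  pose proof (HE2 i Hi Hbig s Hs HsT) as Hdev. unfold c in Hdev.
  assert (Hps : psum Y i s - INR s * mu i = - (INR s * (mu i - muhat Y i s))).
  { unfold muhat. field. lra. }
  assert (0 <= mu i * L) by (pose proof (mu_bounds i Hi); pose proof lnT_gt_half; nra).
  rewrite Hps, Rabs_Ropp, Rabs_mult, (Rabs_pos_eq (INR s)) by lra.
  replace (INR s * mu i * L) with (mu i * L * INR s) by ring.
  rewrite <- mul_sqrt_div by assumption.
  apply Rmult_le_compat_l with (r := INR s) in Hdev; lra.
Qed.

Lemma psum_small_arm i s : (i < k)%nat -> 64 * Sp <= INR s -> (s <= T)%nat ->
  0 < INR s -> INR s * m <= 1764 * L -> psum Y i s <= 1890 * L.
Proof.
  intros Hi Hs HsT Hs0 Hsm. pose proof lnT_gt_half.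
  pose proof (maxmu_ge mu k i Hi). pose proof (mu_bounds i Hi).
  destruct (Rle_lt_dec (mu i) (m / 64)) as [Hsmall|Hbig].
  - pose proof (HE3 i Hi Hsmall s Hs HsT) as Hmean. unfold muhat in Hmean.
    apply Rmult_lt_compat_l with (r := INR s) in Hmean; [|lra].
    replace (INR s * (psum Y i s / INR s)) with (psum Y i s) in Hmean by (field; lra).
    nra.
  - pose proof (Rabs_le_inv _ _ (psum_close_to_mean i s Hi Hbig Hs HsT Hs0)).
    assert (INR s * mu i <= 1764 * L) by nra.
    assert (sqrt (INR s * mu i * L) <= 42 * L).
    { rewrite <- (sqrt_square (42 * L)) by lra. apply sqrt_le_1_alt. nra. }
    lra.
Qed.

Lemma psum_best_arm i s : (i < k)%nat -> mu i = m -> (s <= T)%nat ->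
  4225 * L <= INR s * m -> 4030 * L <= psum Y i s.
Proof.
  intros Hi Hmi HsT Hsm. pose proof lnT_gt_half. pose proof Sparam_mul_maxmu.
  assert (Hs0 : 0 < INR s) by nra.
  assert (Hs : 64 * Sp <= INR s).
  { apply (Rmult_le_reg_r m); [lra|]. rewrite Rmult_assoc. lra. }
  pose proof (Rabs_le_inv _ _ (psum_close_to_mean i s Hi ltac:(lra) Hs HsT Hs0)) as Hdev.
  rewrite Hmi in Hdev.
  assert (sqrt (INR s * m * L) <= INR s * m / 65).
  { rewrite <- (sqrt_square (INR s * m / 65)) by nra. apply sqrt_le_1_alt. nra. }
  lra.
Qed.

Lemma no_stop_before r : INR r < 128 * INR k * Sp -> ~ stop_cond Y U k W r.
Proof.
  intros Hr [i [Hi Hstop]].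
  pose proof kS_gt4. pose proof lnT_gt_half. pose proof Sparam_mul_maxmu.
  pose proof threshold_bounds.
  destruct (exists_nat_floor (128 * INR k * Sp)) as [n [Hn1 Hn2]]; [lra|].
  assert (Hr0 : INR (S n) = INR n + 1) by apply S_INR.
  assert (Hr0T : (S n <= T)%nat) by (pose proof (INR_lt n T ltac:(lra)); lia).
  assert (Hrr0 : (r <= S n)%nat) by (pose proof (INR_lt r (S n) ltac:(lra)); lia).
  destruct (cnt_bounds (S n) i ltac:(lra) Hr0T Hi) as [Hlo Hhi].
  set (s := cnt U i (S n)) in *.
  assert (HkR : 1 <= INR k) by (apply (le_INR 1); lia).
  assert (Hm1 : m <= 1) by (apply maxmu_le1; intros; now apply mu_bounds).
  assert (Hsm : INR s * m <= 1764 * L).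
  { apply (Rmult_le_reg_l (2 * INR k)); [lra|]. nra. }
  assert (Hs : 64 * Sp <= INR s) by (apply (Rmult_le_reg_l (2 * INR k)); lra).
  assert (HsT : (s <= T)%nat) by (pose proof (cnt_le U i (S n)); unfold s; lia).
  assert (psum Y i (cnt U i r) <= psum Y i s).
  { apply (psum_le_mono Y i T); [intros; now apply Y_ge0 | now apply cnt_le_mono | exact HsT]. }
  assert (0 < Sp) by nra.
  pose proof (psum_small_arm i s Hi Hs HsT ltac:(lra) Hsm). lra.
Qed.

Lemma stop_at r : 968 * INR k * Sp - 1 <= INR r -> (r <= T)%nat -> stop_cond Y U k W r.
Proof.
  intros Hr HrT.
  pose proof kS_gt4. pose proof lnT_gt_half. pose proof Sparam_mul_maxmu.
  pose proof threshold_bounds.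
  destruct (maxmu_attained mu k) as [|[i [Hi Hmi]]]; [lra|].
  exists i. split; [exact Hi|].
  destruct (cnt_bounds r i ltac:(lra) HrT Hi) as [Hlo _].
  assert (HkR : 1 <= INR k) by (apply (le_INR 1); lia).
  assert (Hm1 : m <= 1) by (apply maxmu_le1; intros; now apply mu_bounds).
  assert (Hsm : 4225 * L <= INR (cnt U i r) * m).
  { apply (Rmult_le_reg_l (2 * INR k)); [lra|]. nra. }
  pose proof (psum_best_arm i (cnt U i r) Hi Hmi ltac:(pose proof (cnt_le U i r); lia) Hsm).
  lra.
Qed.

End Uniform_sampling.

Theorem lemma8 (k T W : nat) (mu : nat -> R) (Y : nat -> nat -> R) (U : nat -> nat) :
  (1 <= k)%nat ->
  (1 <= W)%nat ->
  (forall i, (i < k)%nat -> 0 <= mu i <= 1) ->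
  maxmu mu k > 0 ->
  (forall i s, (i < k)%nat -> (1 <= s <= T)%nat -> 0 <= Y i s <= 1) ->
  (forall r, (1 <= r <= T)%nat -> (U r < k)%nat) ->
  sqrt (INR T) <= INR W -> (W <= T)%nat ->
  968 * INR k * Sparam mu k T <= INR T ->
  Eevent Y U mu k T ->
  exists tau : nat,
    (1 <= tau)%nat /\ stop_cond Y U k W tau /\
    (forall r : nat, (1 <= r < tau)%nat -> ~ stop_cond Y U k W r) /\
    128 * INR k * Sparam mu k T <= INR tau <= 968 * INR k * Sparam mu k T.
Proof.
  intros Hk HW Hmu Hm HY _ HsW HWT HT [HE1 [HE2 HE3]].
  assert (HY0 : forall i s, (i < k)%nat -> (1 <= s <= T)%nat -> 0 <= Y i s)
    by (intros; now apply HY).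
  assert (4 < INR k * Sparam mu k T) by (eapply (kS_gt4 k T W mu Y); eassumption).
  destruct (exists_nat_floor (968 * INR k * Sparam mu k T)) as [r1 [Hr1a Hr1b]]; [lra|].
  assert (Hr1T : (r1 <= T)%nat) by (apply INR_le; lra).
  destruct (exists_least_nat (stop_cond Y U k W) r1) as [tau [Htau [Hstop Hleast]]].
  { eapply (stop_at k T W mu Y U); try eassumption; lra. }
  assert (Hlow : 128 * INR k * Sparam mu k T <= INR tau).
  { destruct (Rlt_le_dec (INR tau) (128 * INR k * Sparam mu k T)) as [Hlt|]; [|assumption].
    exfalso. eapply (no_stop_before k T W mu Y U) with (r := tau); eassumption. }
  exists tau. split; [apply (INR_lt 0); simpl; lra|].
  split; [exact Hstop|]. split.
  - intros r Hr. apply Hleast. lia.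
  - split; [exact Hlow|]. apply le_INR in Htau. lra.
Qed.
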